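(* If the random vector $(X_1,\dots,X_n)$ is exchangeable, then $(-X_1,X_2,\dots,X_n)$ is SIAMX* and SIAMN*.
   Context: Exchangeable means the distribution is invariant under all permutations of coordinates. For random variables $U,V$, $U\le_{\mathrm{st}}V$ means $F_U(x)\ge F_V(x)$ for all $x$ ($F$ the cdf). A random vector $(Y_1,\dots,Y_n)$ is SIAMX* if $|Y_1|\overset{d}{=}|\max(Y_1,Y_2)|$ and $|\max(Y_1,\dots,Y_{l-1})|\le_{\mathrm{st}}|\max(Y_1,\dots,Y_l)|$ for $l=3,\dots,n$; SIAMN* is the same with $\max$ replaced by $\min$. *)

From HB Require Import structures.
From mathcomp Require Import all_boot all_order all_algebra all_fingroup.
From mathcomp Require Import all_classical all_reals all_analysis.

Set Implicit Arguments.
Unset Strict Implicit.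
Unset Printing Implicit Defensive.

Import Order.TTheory GRing.Theory Num.Theory.
Local Open Scope classical_set_scope.
Local Open Scope ring_scope.

(* A random vector (X_1,...,X_n) is modelled as X : nat -> T -> R, where the
   coordinate X_{i+1} is X i (0-indexed); only X 0, ..., X (n-1) matter. *)

Section Defs.
Context {d : measure_display} {T : measurableType d} {R : realType}.

(* Cylinder sets {f : 'I_n -> R | f i \in B}, B Borel, generating the
   product sigma-algebra on R^n. *)
Definition cylinders (n : nat) : set (set ('I_n -> R)) :=
  [set A | exists i : 'I_n, exists B : set R, measurable B /\ A = [set f | B (f i)]].

Definition vec_measurable (n : nat) (A : set ('I_n -> R)) : Prop :=
  <<s @cylinders n >> A.

Definition exchangeable (P : probability T R) (n : nat) (X : nat -> T -> R) : Prop :=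
  forall (s : {perm 'I_n}) (A : set ('I_n -> R)), vec_measurable A ->
    P ((fun t (i : 'I_n) => X (s i) t) @^-1` A) =
    P ((fun t (i : 'I_n) => X i t) @^-1` A).

Definition dist_eq (P : probability T R) (U V : T -> R) : Prop :=
  forall B : set R, measurable B -> P (U @^-1` B) = P (V @^-1` B).

Definition st_le (P : probability T R) (U V : T -> R) : Prop :=
  forall x : R, (P [set t | (V t <= x)%R] <= P [set t | (U t <= x)%R])%E.

Definition maxY (Y : nat -> T -> R) (l : nat) (t : T) : R :=
  \big[Num.max/Y 0%N t]_(i < l) Y i t.
Definition minY (Y : nat -> T -> R) (l : nat) (t : T) : R :=
  \big[Num.min/Y 0%N t]_(i < l) Y i t.

Definition SIAMX (P : probability T R) (n : nat) (Y : nat -> T -> R) : Prop :=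
  dist_eq P (fun t => `|Y 0%N t|) (fun t => `|maxY Y 2 t|) /\
  forall l : nat, (3 <= l <= n)%N ->
    st_le P (fun t => `|maxY Y l.-1 t|) (fun t => `|maxY Y l t|).

Definition SIAMN (P : probability T R) (n : nat) (Y : nat -> T -> R) : Prop :=
  dist_eq P (fun t => `|Y 0%N t|) (fun t => `|minY Y 2 t|) /\
  forall l : nat, (3 <= l <= n)%N ->
    st_le P (fun t => `|minY Y l.-1 t|) (fun t => `|minY Y l t|).

Definition negfirst (X : nat -> T -> R) : nat -> T -> R :=
  fun i t => if i == 0%N then - X i t else X i t.

End Defs.

From HB Require Import structures.
From mathcomp Require Import all_boot all_order all_algebra all_fingroup.
From mathcomp Require Import all_classical all_reals all_analysis.
From mathcomp Require Import lra measurable_realfun.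
Import Order.TTheory GRing.Theory Num.Theory.
Local Open Scope classical_set_scope.
Local Open Scope ring_scope.

(* Put Y = (-X_1, X_2, ..., X_n), L = max(Y_1, ..., Y_{l-1}) and Z = Y_l, so that
   max(Y_1, ..., Y_l) = max(L, Z).  A case analysis gives
     P(|L| <= x) + P(L < -x, |Z| <= x) = P(|max(L, Z)| <= x) + P(|L| <= x, Z > x).
   In terms of X, the event {L < -x, |Z| <= x} is
   {X_1 > x, |X_l| <= x, X_i < -x for 1 < i < l}; exchanging X_1 and X_l maps it into
   {|L| <= x, Z > x}, and onto it when l = 2.  Exchangeability thus yields
   |L| <=st |max(L, Z)|, with equality in law when l = 2.  Finally min(Y) = -max(-Y),
   and -Y arises in the same way from the exchangeable vector -X, so SIAMN follows
   from SIAMX. *)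

Lemma vec_measurable_box (R : realType) (n : nat) (B : 'I_n -> set R) :
  (forall i, measurable (B i)) -> vec_measurable [set f : 'I_n -> R | forall i, B i (f i)].
Proof.
move=> mB; have [cylT _ _ cylI] := (sigma_algebraP (fun _ _ _ _ => I)).1
  (smallest_sigma_algebra setT (@cylinders R n)).
have -> : [set f : 'I_n -> R | forall i, B i (f i)] =
    \bigcap_(i in [set: 'I_n]) [set f | B i (f i)].
  by apply/seteqP; split => f /= fB i; [move=> _|]; exact: fB.
rewrite -bigsetI_fset_set; last exact: finite_finset.
elim/big_ind: _ => // i _.
by apply: sub_sigma_algebra; exists i, (B i).
Qed.

Section maxY.
Context {d : measure_display} {T : measurableType d} {R : realType} (Y : nat -> T -> R).

Lemma maxYS k t : maxY Y k.+1 t = Num.max (maxY Y k t) (Y k t).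
Proof.
rewrite /maxY -!(big_mkord xpredT (fun i => Y i t)).
rewrite (big_cat_nat_idem (maxxx _) (leq0n k) (leqnSn k)) big_nat1_id.
by rewrite /= [X in Num.max _ X]maxC maxA -bigmax_idr.
Qed.

Lemma le_maxY k t i : (i < k)%N -> Y i t <= maxY Y k t.
Proof. by move=> ik; exact: (le_bigmax _ (fun j : 'I_k => Y j t) (Ordinal ik)). Qed.

Lemma maxY_lt k t c : Y 0%N t < c -> (forall i, (i < k)%N -> Y i t < c) -> maxY Y k t < c.
Proof. by move=> Y0c Yc; apply: bigmax_lt => // i _; exact: Yc. Qed.

Lemma maxY_id k t : (forall i, (i < k)%N -> Y i t <= Y 0%N t) -> maxY Y k t = Y 0%N t.
Proof.
move=> YY0; apply/le_anti; rewrite bigmax_le //= => [|i _]; last exact: YY0.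
by rewrite /maxY bigmax_idl le_max lexx.
Qed.

Lemma measurable_maxY k : (forall i, (i <= k)%N -> measurable_fun setT (Y i)) ->
  measurable_fun setT (maxY Y k).
Proof.
elim: k => [|k IHk] mY.
  have -> : maxY Y 0 = Y 0%N by apply/funext => t; rewrite /maxY big_ord0.
  exact: mY.
have -> : maxY Y k.+1 = maxY Y k \max Y k by apply/funext => t; rewrite maxYS.
by apply: measurable_maxr; [apply: IHk => i ik; apply: mY; exact: leqW | exact: mY].
Qed.

Lemma minY_opp k t : minY Y k t = - maxY (fun i t => - Y i t) k t.
Proof.
rewrite /minY /maxY (big_morph -%R (fun x y => oppr_max x y) (opprK (Y 0%N t))).
by apply: eq_bigr => i _; rewrite opprK.
Qed.

End maxY.

Section measurable_sets.
Context {d : measure_display} {T : measurableType d} {R : realType}.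
Context {f g : T -> R}.
Hypotheses (mf : measurable_fun setT f) (mg : measurable_fun setT g).

Lemma measurable_set_ltr : measurable [set t | f t < g t].
Proof. by rewrite -[X in measurable X]setTI; exact: measurable_fun_ltr. Qed.

Lemma measurable_set_ler : measurable [set t | f t <= g t].
Proof. by rewrite -[X in measurable X]setTI; exact: measurable_fun_ler. Qed.

End measurable_sets.

Lemma measurable_box {d : measure_display} {T : measurableType d} {R : realType} (n : nat)
    (B : 'I_n -> set R) (Z : 'I_n -> T -> R) :
  (forall i, measurable (B i)) -> (forall i, measurable_fun setT (Z i)) ->
  measurable [set t | forall i, B i (Z i t)].
Proof.
move=> mB mZ; have -> : [set t | forall i, B i (Z i t)] = \bigcap_(i in [set: 'I_n]) (Z i @^-1` B i).
  by apply/seteqP; split => t /= ZB i; [move=> _|]; exact: ZB.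
apply: fin_bigcap_measurable; first exact: finite_finset.
by move=> i _; rewrite -[X in measurable X]setTI; exact: mZ.
Qed.

Section cdf.
Context {d : measure_display} {T : measurableType d} {R : realType}.
Variable P : probability T R.

Lemma probability_le_split (W : T -> R) : measurable_fun setT W -> forall a b, a <= b ->
  P [set t | W t <= b] = (P [set t | W t <= a]%R + P (W @^-1` `]a, b]))%E.
Proof.
move=> mW a b ab; rewrite -measureU.
- congr (P _); apply/seteqP; split => t /=; rewrite /preimage /= in_itv /=.
    by case: (lerP (W t) a) => Wa Wb; [left | right; apply/andP].
  by case=> [Wa|/andP[_ //]]; exact: le_trans Wa ab.
- exact: measurable_set_ler.
- by rewrite -[X in measurable X]setTI; exact: mW.
- by apply/seteqP; split => t // [/= Wa]; rewrite /preimage /= in_itv /= ltNge Wa.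
Qed.

Section law_of_cdf.
Variables U V : T -> R.
Hypotheses (mU : measurable_fun setT U) (mV : measurable_fun setT V).
HB.instance Definition _ := isMeasurableFun.Build _ _ _ _ U mU.
HB.instance Definition _ := isMeasurableFun.Build _ _ _ _ V mV.

Lemma dist_eq_of_cdf : (forall x, P [set t | U t <= x] = P [set t | V t <= x]) ->
  dist_eq P U V.
Proof.
move=> cdfUV B mB.
apply: (@measure_unique _ R _ (@ocitv R) (fun k => `]-k%:R, k%:R]%classic) erefl
  (@ocitvI R) (fun k => is_ocitv _ _) _ (distribution P U) (distribution P V)) => //.
- apply/seteqP; split => y // _.
  have [k yk] : exists k : nat, `|y| < k%:R.
    by exists (Num.Def.archi_bound `|y|); exact: archi_boundP.
  by exists k => //=; rewrite in_itv /=; move: yk; rewrite ltr_norml => /andP[-> /ltW ->].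
- move=> _ [[a b] _ <-] /=; have [ab|ba] := leP a b; last first.
    by rewrite set_itv_ge ?measure0 // bnd_simp -leNgt ltW.
  have finPUa : P [set t | U t <= a] \is a fin_num.
    by apply: fin_num_measure; exact: measurable_set_ler.
  rewrite -[LHS](addeK _ finPUa) -[RHS](addeK _ finPUa); congr (_ - _)%E.
  rewrite /distribution /pushforward addeC -(probability_le_split U mU a b ab) cdfUV.
  by rewrite (probability_le_split V mV a b ab) cdfUV addeC.
- by move=> k; apply: (le_lt_trans (probability_le1 _ _)) => //; exact: ltry.
Qed.

End law_of_cdf.

Lemma probability_abs_max_le (U Z : T -> R) (x : R) :
  measurable_fun setT U -> measurable_fun setT Z ->
  (P [set t | `|U t| <= x]%R + P ([set t | U t < - x]%R `&` [set t | `|Z t| <= x]%R) =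
   P [set t | `|Num.max (U t) (Z t)| <= x]%R +
   P ([set t | `|U t| <= x]%R `&` [set t | x < Z t]%R))%E.
Proof.
move=> mU mZ; have mx : measurable_fun setT (cst x : T -> R) by [].
have mabs (f : T -> R) : measurable_fun setT f -> measurable_fun setT (fun t => `|f t|).
  by move=> mf; exact: measurableT_comp.
rewrite -!measureU.
- congr (P _); apply/seteqP; split => t /=; rewrite !ler_norml;
    case: (lerP (U t) (Z t)) => UZ; rewrite ?(max_r (ltW _)) ?max_r ?max_l //;
    case: (lerP (- x) (U t)); case: (lerP (U t) x);
    case: (lerP (- x) (Z t)); case: (lerP (Z t) x); move=> /= *; (try tauto); lra.
- by apply: measurable_set_ler mx; apply/mabs/measurable_maxr.
- by apply: measurableI; [exact: measurable_set_ler (mabs _ mU) mx | exact: measurable_set_ltr].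
- apply/seteqP; split => t //= [].
  by rewrite !ler_norml ge_max => /andP[_ /andP[_ +]] [_ +]; lra.
- exact: measurable_set_ler (mabs _ mU) mx.
- by apply: measurableI; [exact: measurable_set_ltr | exact: measurable_set_ler (mabs _ mZ) mx].
- by apply/seteqP; split => t //= []; rewrite !ler_norml => /andP[+ _] [+ _]; lra.
Qed.

End cdf.

Section exchangeable_boxes.
Context {d : measure_display} {T : measurableType d} {R : realType}.
Variables (P : probability T R) (n : nat).

Definition box_exchangeable (X : nat -> T -> R) :=
  forall (s : {perm 'I_n}) (B : 'I_n -> set R), (forall i, measurable (B i)) ->
  P [set t | forall i, B i (X (s i) t)] = P [set t | forall i, B i (X i t)].

Lemma exchangeable_box (X : nat -> T -> R) :
  exchangeable P n X -> box_exchangeable X.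
Proof.
move=> exX s B mB; rewrite (exX s [set f | forall i, B i (f i)]) //.
exact: vec_measurable_box.
Qed.

Lemma box_exchangeableN (X : nat -> T -> R) :
  box_exchangeable X -> box_exchangeable (fun i t => - X i t).
Proof.
move=> exX s B mB; apply: (exX s (fun i => -%R @^-1` B i)) => i.
by rewrite -[X in measurable X]setTI; exact: oppr_measurable.
Qed.

End exchangeable_boxes.

Section negfirst_SIAMX.
Context {d : measure_display} {T : measurableType d} {R : realType}.
Variables (P : probability T R) (n : nat) (X : nat -> T -> R).
Hypotheses (n2 : (2 <= n)%N) (mX : forall i, (i < n)%N -> measurable_fun setT (X i)).
Hypothesis exX : box_exchangeable P n X.

Let Y := negfirst X.

Let mY i : (i < n)%N -> measurable_fun setT (Y i).
Proof.
move=> ilt; rewrite /Y /negfirst; case: (i == 0)%N; last exact: mX.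
by apply: measurableT_comp; [exact: oppr_measurable | exact: mX].
Qed.

Section step.
Variables (l : nat) (x : R).
Hypotheses (l2 : (2 <= l)%N) (ln : (l <= n)%N).

Let L := maxY Y l.-1.
Let Z := Y l.-1.

Let l1_gt0 : (0 < l.-1)%N.
Proof. by rewrite -ltnS (ltn_predK l2). Qed.
Let l1_lt_n : (l.-1 < n)%N.
Proof. by rewrite (leq_trans _ ln) // ltn_predL (leq_trans _ l2). Qed.
Let n_gt0 : (0 < n)%N.
Proof. exact: leq_trans n2. Qed.

Let mL : measurable_fun setT L.
Proof. by apply: measurable_maxY => i il; apply: mY; exact: leq_ltn_trans l1_lt_n. Qed.

Let ZE t : Z t = X l.-1 t.
Proof. by rewrite /Z /Y /negfirst (gtn_eqF l1_gt0). Qed.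

Let i0 : 'I_n := Ordinal n_gt0.
Let j : 'I_n := Ordinal l1_lt_n.
Let s := tperm i0 j.

(* The event {L < -x, |Z| <= x} written in the coordinates X_1, ..., X_n. *)
Let swap_box (i : 'I_n) : set R := [set y | if val i == 0%N then x < y
  else if val i == l.-1 then `|y| <= x else if (val i < l.-1)%N then y < - x else true].

Let measurable_swap_box i : measurable (swap_box i).
Proof.
have mid : measurable_fun setT (@id R) by [].
rewrite /swap_box; case: (val i == 0%N); first exact: measurable_set_ltr (measurable_cst x) mid.
case: (val i == l.-1); first exact: measurable_set_ler (@normr_measurable R setT) (measurable_cst x).
case: (val i < l.-1)%N; first exact: measurable_set_ltr mid (measurable_cst (- x)).
by rewrite [X in measurable X](_ : _ = setT) //; apply/seteqP.
Qed.

Let tail_eventE : [set t | L t < - x] `&` [set t | `|Z t| <= x] =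
  [set t | forall i, swap_box i (X i t)].
Proof.
apply/seteqP; split => t /=.
  move=> [Lx Zx] i; rewrite /swap_box /=.
  have Yi_le_L k : (k < l.-1)%N -> Y k t <= L t by exact: le_maxY.
  case: ifP => [/eqP -> | i_neq0].
    by have := Yi_le_L 0%N l1_gt0; rewrite /Y /negfirst /=; lra.
  case: ifP => [/eqP -> | _]; first by rewrite -ZE.
  case: ifP => // il; have := Yi_le_L i il.
  by rewrite /Y /negfirst i_neq0; lra.
move=> inbox; split; last by have := inbox j; rewrite /swap_box /= (gtn_eqF l1_gt0) eqxx ZE.
apply: maxY_lt => [|i il].
  by have := inbox i0; rewrite /swap_box /Y /negfirst /=; lra.
rewrite /Y /negfirst; case: ifP => [/eqP -> | i_neq0].
  by have := inbox i0; rewrite /swap_box /=; lra.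
have := inbox (Ordinal (ltn_trans il l1_lt_n)).
by rewrite /swap_box /= i_neq0 il (ltn_eqF il).
Qed.

Let swap_box_sub_head_event : [set t | forall i, swap_box i (X (s i) t)] `<=`
  [set t | `|L t| <= x] `&` [set t | x < Z t].
Proof.
move=> t /= inbox.
have := inbox j; rewrite /s tpermR /swap_box /= (gtn_eqF l1_gt0) eqxx => X0_le_x.
have := inbox i0; rewrite /s tpermL /swap_box /= => Xl_gt_x.
split; last by rewrite ZE.
rewrite /L maxY_id; first by rewrite /Y /negfirst /= normrN.
move=> i il; rewrite /Y /negfirst /=; case: ifP => [/eqP -> // | i_neq0].
have := inbox (Ordinal (ltn_trans il l1_lt_n)); rewrite /s tpermD.
- by rewrite /swap_box /= i_neq0 il (ltn_eqF il); move: X0_le_x; rewrite ler_norml; lra.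
- by apply/eqP => /(congr1 val) /= /eqP; rewrite eq_sym i_neq0.
- by apply/eqP => /(congr1 val) /= il1; rewrite il1 ltnn in il.
Qed.

Let head_event_sub_swap_box : l = 2 -> [set t | `|L t| <= x] `&` [set t | x < Z t] `<=`
  [set t | forall i, swap_box i (X (s i) t)].
Proof.
move=> l_eq2 t /= [Lx Zx] i.
have L_Y0 : L t = Y 0%N t by rewrite /L maxY_id // l_eq2 => k /ltnSE; rewrite leqn0 => /eqP ->.
rewrite L_Y0 /Y /negfirst /= normrN in Lx; rewrite ZE in Zx.
have [-> | i_neq_i0] := eqVneq i i0; first by rewrite /s tpermL /swap_box.
have [-> | i_neq_j] := eqVneq i j.
  by rewrite /s tpermR /swap_box /= (gtn_eqF l1_gt0) eqxx.
rewrite /s tpermD 1?eq_sym // /swap_box /=.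
have i_neq0 : (val i == 0%N) = false.
  by apply: contraNF i_neq_i0 => /eqP i0E; apply/eqP/val_inj.
have i_neq_l1 : (val i == l.-1) = false.
  by apply: contraNF i_neq_j => /eqP ijE; apply/eqP/val_inj.
by rewrite i_neq0 i_neq_l1 l_eq2 ltnS leqn0 i_neq0.
Qed.

Let measurable_head_event : measurable ([set t | `|L t| <= x] `&` [set t | x < Z t]).
Proof.
have mabsL : measurable_fun setT (fun t => `|L t|) by exact: measurableT_comp.
apply: measurableI; first exact: measurable_set_ler mabsL (measurable_cst x).
by apply: (measurable_set_ltr (f := cst x) (g := Z)) => //; exact: mY.
Qed.

Let measurable_swapped_box : measurable [set t | forall i, swap_box i (X (s i) t)].
Proof. by apply: measurable_box => // i; exact: mX. Qed.

Let probability_tail_le_head :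
  (P ([set t | L t < - x]%R `&` [set t | `|Z t| <= x]%R) <=
   P ([set t | `|L t| <= x]%R `&` [set t | x < Z t]%R))%E.
Proof.
rewrite tail_eventE -(exX s swap_box measurable_swap_box).
by apply: le_measure; rewrite ?inE //; exact: swap_box_sub_head_event.
Qed.

Let probability_tail_eq_head2 : l = 2 ->
  P ([set t | L t < - x] `&` [set t | `|Z t| <= x]) =
  P ([set t | `|L t| <= x] `&` [set t | x < Z t]).
Proof.
move=> l_eq2; apply/le_anti; rewrite probability_tail_le_head /=.
rewrite tail_eventE -(exX s swap_box measurable_swap_box).
by apply: le_measure; rewrite ?inE //; exact: head_event_sub_swap_box.
Qed.

Let probability_abs_maxY_balance :
  (P [set t | `|maxY Y l.-1 t| <= x]%R + P ([set t | L t < - x]%R `&` [set t | `|Z t| <= x]%R) =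
   P [set t | `|maxY Y l t| <= x]%R + P ([set t | `|L t| <= x]%R `&` [set t | x < Z t]%R))%E.
Proof.
have -> : maxY Y l = fun t => Num.max (L t) (Z t).
  by apply/funext => t; rewrite -[in maxY Y l](ltn_predK l2) maxYS.
exact: probability_abs_max_le P _ _ x mL (mY _ l1_lt_n).
Qed.

Let fin_head_event : P ([set t | `|L t| <= x]%R `&` [set t | x < Z t]%R) \is a fin_num.
Proof. exact: fin_num_measure measurable_head_event. Qed.

Lemma cdf_abs_maxY_le_pred :
  (P [set t | `|maxY Y l t| <= x]%R <= P [set t | `|maxY Y l.-1 t| <= x]%R)%E.
Proof.
rewrite -(leeD2rE _ _ fin_head_event) -probability_abs_maxY_balance.
exact: leeD2l probability_tail_le_head.
Qed.

Lemma cdf_abs_maxY2 : l = 2 ->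
  P [set t | `|maxY Y l t| <= x] = P [set t | `|maxY Y l.-1 t| <= x].
Proof.
move=> l_eq2; rewrite -[LHS](addeK _ fin_head_event) -probability_abs_maxY_balance.
by rewrite probability_tail_eq_head2 // addeK.
Qed.

End step.

Lemma SIAMX_negfirst : SIAMX P n Y.
Proof.
have maxY1 : maxY Y 1 = Y 0%N.
  by apply/funext => t; apply: maxY_id => i; rewrite ltnS leqn0 => /eqP ->.
split=> [|l /andP[l3 ln] x]; last exact: cdf_abs_maxY_le_pred (ltnW l3) ln.
have maxY2 : maxY Y 2 = Y 0%N \max Y 1%N by apply/funext => t; rewrite maxYS maxY1.
apply: dist_eq_of_cdf => [||x].
- by apply: measurableT_comp => //; exact: mY 0%N (ltnW n2).
- rewrite maxY2; apply: measurableT_comp => //.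
  by apply: measurable_maxr; [exact: mY 0%N (ltnW n2) | exact: mY 1%N n2].
- by rewrite (cdf_abs_maxY2 2 x (leqnn 2) n2 erefl) maxY1.
Qed.

End negfirst_SIAMX.

Lemma SIAMN_of_SIAMX_opp {d : measure_display} {T : measurableType d} {R : realType}
    (P : probability T R) (n : nat) (Y : nat -> T -> R) :
  SIAMX P n (fun i t => - Y i t) -> SIAMN P n Y.
Proof.
have abs_minY l : (fun t => `|minY Y l t|) = (fun t => `|maxY (fun i t => - Y i t) l t|).
  by apply/funext => t; rewrite minY_opp normrN.
have abs_Y0 : (fun t => `|Y 0%N t|) = (fun t => `|- Y 0%N t|).
  by apply/funext => t; rewrite normrN.
move=> [law2 st_step]; split; first by rewrite abs_Y0 abs_minY.
by move=> l l3n; rewrite !abs_minY; exact: st_step.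
Qed.

Lemma negfirstN {d : measure_display} {T : measurableType d} {R : realType}
    (X : nat -> T -> R) :
  (fun i t => - negfirst X i t) = negfirst (fun i t => - X i t).
Proof. by apply/funext => i; apply/funext => t; rewrite /negfirst; case: (i == 0)%N. Qed.

Theorem corollary3p11 (d : measure_display) (T : measurableType d) (R : realType)
  (P : probability T R) (n : nat) (X : nat -> T -> R) :
  (2 <= n)%N ->
  (forall i : nat, (i < n)%N -> measurable_fun setT (X i)) ->
  exchangeable P n X ->
  SIAMX P n (negfirst X) /\ SIAMN P n (negfirst X).
Proof.
move=> n2 mX /exchangeable_box exX; split; first exact: SIAMX_negfirst.
apply: SIAMN_of_SIAMX_opp; rewrite negfirstN; apply: SIAMX_negfirst => //.
- by move=> i ilt; apply: measurableT_comp => //; exact: mX.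
- exact: box_exchangeableN.
Qed.
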